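(* Let $(X,\Sigma,\mu)$ be a measure space, $n\ge1$, $\mathbb{F}\in\{\mathbb{R},\mathbb{C}\}$, and $T:L^2(X,\mu;\mathbb{F}^n)\to\mathbb{F}$ a non-zero linear form. Suppose $\dim L^2(X,\mu;\mathbb{F})\ge n$. Then for every $d\in\mathbb{F}\setminus\{0\}$, the set $\mathcal{F}^{\mathbb{F}}_{(X,\mu),n}\cap T^{-1}(\{d\})$ is dense in $T^{-1}(\{d\})$ (for the norm of $L^2(X,\mu;\mathbb{F}^n)$).
   Context: A family $\Phi=(\varphi_x)_{x\in X}$ in $\mathbb{F}^n$ (with measurable coordinates) is a continuous frame indexed by $(X,\mu)$ if there are $0<A\le B$ with $A\|v\|^2\le\int_X|\langle v,\varphi_x\rangle|^2d\mu(x)\le B\|v\|^2$ for all $v\in\mathbb{F}^n$. $\mathcal{F}^{\mathbb{F}}_{(X,\mu),n}$ denotes the set of such frames, viewed as a subset of $L^2(X,\mu;\mathbb{F}^n)$ (equivalently, the elements of $L^2(X,\mu;\mathbb{F}^n)$ whose coordinate functions are linearly independent in $L^2(X,\mu;\mathbb{F})$). *)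

From HB Require Import structures.
From mathcomp Require Import all_boot all_order all_algebra.
From mathcomp Require Import all_classical all_reals all_analysis.
From mathcomp Require Import complex.
Set Implicit Arguments. Unset Strict Implicit. Unset Printing Implicit Defensive.
Import Order.TTheory GRing.Theory Num.Theory.
Local Open Scope ring_scope.
Local Open Scope classical_set_scope.

(* A scalar field F in {R, C}, presented through its real and imaginary
   parts and its conjugation (used for measurability, moduli and the
   Hermitian inner product on F^n). *)
Record scalars (R : realType) := Scalars {
  sc_K :> fieldType;
  sc_re : sc_K -> R;
  sc_im : sc_K -> R;
  sc_conj : sc_K -> sc_K }.

Definition realF (R : realType) : scalars R :=
  @Scalars R R id (fun _ => 0) id.

Definition complexF (R : realType) : scalars R :=
  @Scalars R (complex.complex (R : realFieldType) : fieldType) (@complex.Re R) (@complex.Im R) (@complex.conjc R).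

Section L2.
Context (R : realType) (F : scalars R).
Context (d : measure_display) (X : measurableType d)
        (mu : {measure set X -> \bar R}).

Definition abs2 (z : F) : R := sc_re z ^+ 2 + sc_im z ^+ 2.

Definition L2scal (f : X -> F) : Prop :=
  measurable_fun setT (fun x => sc_re (f x)) /\
  measurable_fun setT (fun x => sc_im (f x)) /\
  (\int[mu]_x (abs2 (f x))%:E < +oo)%E.

Definition vnorm2 (n : nat) (v : 'rV[F]_n) : R := \sum_(i < n) abs2 (v ord0 i).

Definition vdot (n : nat) (v w : 'rV[F]_n) : F :=
  \sum_(i < n) v ord0 i * sc_conj (w ord0 i).

(* representatives of elements of L^2(X, mu; F^n) *)
Definition L2vec (n : nat) (f : X -> 'rV[F]_n) : Prop :=
  forall i : 'I_n, L2scal (fun x => f x ord0 i).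

Definition L2dist2 (n : nat) (f g : X -> 'rV[F]_n) : \bar R :=
  \int[mu]_x (vnorm2 (f x - g x))%:E.

Definition is_cont_frame (n : nat) (phi : X -> 'rV[F]_n) : Prop :=
  L2vec phi /\
  exists A B : R, 0 < A /\ A <= B /\
    forall v : 'rV[F]_n,
      ((A * vnorm2 v)%:E <= \int[mu]_x (abs2 (vdot v (phi x)))%:E)%E /\
      (\int[mu]_x (abs2 (vdot v (phi x)))%:E <= (B * vnorm2 v)%:E)%E.

(* T is a linear form on L^2(X, mu; F^n) (given on representatives; it is
   required to be compatible with equality mu-a.e.) *)
Definition L2_linear_form (n : nat) (T : (X -> 'rV[F]_n) -> F) : Prop :=
  (forall f g, L2vec f -> L2vec g -> {ae mu, forall x, f x = g x} -> T f = T g) /\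
  (forall (a : F) f g, L2vec f -> L2vec g ->
     T (fun x => a *: f x + g x) = a * T f + T g).

Definition L2_nonzero_form (n : nat) (T : (X -> 'rV[F]_n) -> F) : Prop :=
  exists f, L2vec f /\ T f != 0.

Definition L2_dim_ge (n : nat) : Prop :=
  exists h : 'I_n -> X -> F,
    (forall i, L2scal (h i)) /\
    forall c : 'I_n -> F,
      {ae mu, forall x, \sum_(i < n) c i * h i x = 0} -> forall i, c i = 0.

Definition frames_dense_in_fiber (n : nat) (T : (X -> 'rV[F]_n) -> F) (c : F) : Prop :=
  forall f, L2vec f -> T f = c ->
    forall e : R, 0 < e ->
      exists g, is_cont_frame g /\ T g = c /\ (L2dist2 f g < (e ^+ 2)%:E)%E.

End L2.

Definition corollary6p1_for (R : realType) (F : scalars R) : Prop :=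
  forall (d : measure_display) (X : measurableType d)
         (mu : {measure set X -> \bar R}) (n : nat)
         (T : (X -> 'rV[F]_n) -> F),
    (1 <= n)%N ->
    L2_linear_form mu T ->
    L2_nonzero_form mu T ->
    L2_dim_ge F mu n ->
    forall c : F, c != 0 -> frames_dense_in_fiber mu T c.

From mathcomp Require Import all_boot all_order all_algebra.
From mathcomp Require Import all_classical all_reals all_analysis.
From mathcomp Require Import complex ring lra measurable_realfun.
Set Implicit Arguments. Unset Strict Implicit. Unset Printing Implicit Defensive.
Import Order.TTheory GRing.Theory Num.Theory.
Local Open Scope ring_scope.

(* Fix f with T f = c and independent h_1, ..., h_n in L^2(X, mu; F); put
   H = (h_1, ..., h_n) and K = H - (T H / c) f.  Then T K = 0, so the line
   a |-> f + a K lies in the fibre, at distance |a| ||K|| from f.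
   (1) Frame criterion: if phi in L^2 is "a.e. total" (no v != 0 has
       <v, phi x> = 0 a.e.), then v |-> \int |<v, phi>|^2 is, in real
       coordinates, a positive definite quadratic form, hence is squeezed
       between two positive multiples of |v|^2: phi is a continuous frame.
   (2) Among n+1 distinct small real parameters, some line point is a.e.
       total.  Otherwise witnesses V_j satisfy <V_j, f> + lam_j <V_j, H> = 0
       a.e. for distinct Moebius values lam_j; by independence of H their
       linear relations are stable under multiplication by lam_j, so they
       are free like eigenvectors -- impossible for n+1 vectors of F^n. *)

(* A family of non-zero vectors whose space of linear relations is stable under
   multiplication by pairwise distinct scalars lam j is free, exactly like a
   family of eigenvectors for distinct eigenvalues. *)
Lemma eigen_family_free (K : fieldType) (V : lmodType K) k
    (v : 'I_k -> V) (lam : 'I_k -> K) :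
  injective lam -> (forall j, v j != 0) ->
  (forall c : 'I_k -> K, \sum_j c j *: v j = 0 -> \sum_j (c j * lam j) *: v j = 0) ->
  forall c : 'I_k -> K, \sum_j c j *: v j = 0 -> forall j, c j = 0.
Proof.
elim: k v lam => [|k IH] v lam lam_inj v_n0 stable c rel j; first by case: j.
pose w i := widen_ord (leqnSn k) i.
have liftE i : lift ord_max i = w i by apply: val_inj; exact: lift_max.
(* extension by zero of a relation among the first k vectors *)
have restrict_stable (c' : 'I_k -> K) : \sum_i c' i *: v (w i) = 0 ->
    \sum_i (c' i * lam (w i)) *: v (w i) = 0.
  move=> rel'; pose e j := if unlift ord_max j is Some i then c' i else 0.
  have ew i : e (w i) = c' i by rewrite /e -liftE liftK.
  have e_max : e ord_max = 0 by rewrite /e unlift_none.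
  have := stable e; rewrite !big_ord_recr /= e_max !mul0r !scale0r !addr0.
  by under eq_bigr do rewrite ew; move=> /(_ rel'); under eq_bigr do rewrite ew.
(* eliminating the last vector: c j (lam j - lam max) is a shorter relation *)
have shorter : \sum_i (c (w i) * (lam (w i) - lam ord_max)) *: v (w i) = 0.
  have : \sum_j (c j * (lam j - lam ord_max)) *: v j = 0.
    under eq_bigr do rewrite mulrBr scalerBl.
    rewrite sumrB (stable c rel) sub0r.
    under eq_bigr do rewrite mulrC -scalerA.
    by rewrite -scaler_sumr rel scaler0 oppr0.
  by rewrite big_ord_recr /= subrr mulr0 scale0r addr0.
have lamw_inj : injective (fun i => lam (w i)).
  by move=> a b /lam_inj/(congr1 val) /= ab; apply: val_inj.
have first_zero i : c (w i) = 0.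
  have := IH _ _ lamw_inj (fun i => v_n0 (w i)) restrict_stable
    (fun i => c (w i) * (lam (w i) - lam ord_max)) shorter i.
  move/eqP.
  rewrite mulf_eq0 subr_eq0 => /orP[/eqP //|/eqP/lam_inj/(congr1 val)] /= ieq.
  by have := ltn_ord i; rewrite ieq ltnn.
have last_zero : c ord_max = 0.
  move: rel; rewrite big_ord_recr /= big1 ?add0r => [/eqP|i _]; last first.
    by rewrite first_zero scale0r.
  by rewrite scaler_eq0 (negbTE (v_n0 _)) orbF => /eqP.
by case: (unliftP ord_max j) => [i ->|->] //; rewrite liftE first_zero.
Qed.

Lemma vectors_dependent (K : fieldType) n (v : 'I_n.+1 -> 'rV[K]_n) :
  exists2 c : 'I_n.+1 -> K, \sum_j c j *: v j = 0 & exists j, c j != 0.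
Proof.
pose A := \matrix_j v j.
have : ~~ row_free A by rewrite -row_leq_rank -ltnNge ltnS rank_leq_col.
have [/inj_row_free -> //|] := pselect (forall w : 'rV_n.+1, w *m A = 0 -> w = 0).
move=> /existsNP[w /not_implyP[wA /eqP/rV0Pn w_n0]] _.
exists (fun j => w 0 j) => //.
by rewrite -[RHS]wA mulmx_sum_row; apply: eq_bigr => j _; rewrite rowK.
Qed.

Section QuadraticForms.
Variable R : realType.

Definition qf m (M : 'M[R]_m) (u w : 'rV[R]_m) : R := (u *m M *m w^T) 0 0.
Definition nrm2 m (w : 'rV[R]_m) : R := (w *m w^T) 0 0.

Lemma nrm2E m (w : 'rV[R]_m) : nrm2 w = \sum_j w 0 j ^+ 2.
Proof. by rewrite /nrm2 mxE; apply: eq_bigr => j _; rewrite mxE expr2. Qed.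

Lemma nrm2_ge0 m (w : 'rV[R]_m) : 0 <= nrm2 w.
Proof. by rewrite nrm2E sumr_ge0 // => j _; rewrite sqr_ge0. Qed.

Lemma sq_le_nrm2 m (w : 'rV[R]_m) j : w 0 j ^+ 2 <= nrm2 w.
Proof. by rewrite nrm2E (bigD1 j) //= lerDl sumr_ge0 // => i _; rewrite sqr_ge0. Qed.

Lemma qfE m M (u w : 'rV[R]_m) : qf M u w = \sum_j \sum_l u 0 j * M j l * w 0 l.
Proof.
rewrite /qf mxE; under eq_bigr do rewrite !mxE mulr_suml.
by rewrite exchange_big.
Qed.

Lemma qfDl m M (u v w : 'rV[R]_m) : qf M (u + v) w = qf M u w + qf M v w.
Proof. by rewrite /qf !mulmxDl mxE. Qed.

Lemma qfDr m M (u v w : 'rV[R]_m) : qf M w (u + v) = qf M w u + qf M w v.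
Proof. by rewrite /qf linearD /= mulmxDr mxE. Qed.

Lemma qfZl m M a (u w : 'rV[R]_m) : qf M (a *: u) w = a * qf M u w.
Proof. by rewrite /qf -!scalemxAl mxE. Qed.

Lemma qfZr m M a (u w : 'rV[R]_m) : qf M w (a *: u) = a * qf M w u.
Proof. by rewrite /qf linearZ /= -scalemxAr mxE. Qed.

Lemma qf0r m (M : 'M[R]_m) u : qf M u 0 = 0.
Proof. by rewrite /qf linear0 mulmx0 mxE. Qed.

Lemma qfDM m (M1 M2 : 'M[R]_m) w : qf (M1 + M2) w w = qf M1 w w + qf M2 w w.
Proof. by rewrite /qf mulmxDr mulmxDl mxE. Qed.

Lemma qf_sym m (M : 'M[R]_m) u w : M^T = M -> qf M w u = qf M u w.
Proof.
move=> sM; rewrite /qf; have -> : u *m M *m w^T = (w *m M *m u^T)^T.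
  by rewrite !trmx_mul trmxK sM mulmxA.
by rewrite [RHS]mxE.
Qed.

Lemma qf_bound m (M : 'M[R]_m) (w : 'rV[R]_m) :
  `|qf M w w| <= (\sum_j \sum_l `|M j l|) * nrm2 w.
Proof.
rewrite qfE (le_trans (ler_norm_sum _ _ _)) // mulr_suml ler_sum // => j _.
rewrite (le_trans (ler_norm_sum _ _ _)) // mulr_suml ler_sum // => l _.
have wj := sq_le_nrm2 w j; have wl := sq_le_nrm2 w l.
rewrite -real_normK ?num_real // in wj; rewrite -real_normK ?num_real // in wl.
have wjl : `|w 0 j| * `|w 0 l| <= nrm2 w by nra.
by rewrite !normrM mulrAC mulrC ler_wpM2l ?normr_ge0.
Qed.

Lemma qf_upper m (M : 'M[R]_m) : exists B, 0 <= B /\ forall w, qf M w w <= B * nrm2 w.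
Proof.
exists (\sum_j \sum_l `|M j l|); split; first by rewrite sumr_ge0 // => j _; rewrite sumr_ge0.
by move=> w; rewrite (le_trans (ler_norm _)) // qf_bound.
Qed.

Section PositiveDefinite.
Variables (m : nat) (M : 'M[R]_m).
Hypotheses (M_sym : M^T = M) (M_pd : forall w, w != 0 -> 0 < qf M w w).

Lemma qf_psd w : 0 <= qf M w w.
Proof. by have [->|/M_pd/ltW//] := eqVneq w 0; rewrite qf0r. Qed.

Lemma qf_CS u w : qf M u w ^+ 2 <= qf M u u * qf M w w.
Proof.
have [->|w_n0] := eqVneq w 0; first by rewrite qf0r expr0n /= mulr_ge0 ?qf_psd.
have c_gt0 := M_pd w_n0.
set a := qf M u u; set b := qf M u w; set c := qf M w w.
have := qf_psd (u + (- b / c) *: w).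
rewrite qfDl !qfDr !qfZl !qfZr (qf_sym u w M_sym) -/a -/b -/c => h.
have : 0 <= c * (a + - b / c * b + (- b / c * b + - b / c * (- b / c * c))).
  by rewrite mulr_ge0 // ltW.
have -> : c * (a + - b / c * b + (- b / c * b + - b / c * (- b / c * c)))
   = a * c - b ^+ 2 by field; rewrite gt_eqF.
lra.
Qed.

(* With N = M^-1 and u = w N, Cauchy-Schwarz gives
   |w|^4 = qf M u w ^2 <= qf N^T w w * qf M w w <= C |w|^2 qf M w w. *)
Lemma pd_lower : exists A, 0 < A /\ forall w, A * nrm2 w <= qf M w w.
Proof.
have M_unit : M \in unitmx.
  rewrite unitmxE unitfE; apply/negP => /det0P [v v_n0 vM0].
  by have := M_pd v_n0; rewrite /qf vM0 mul0mx mxE ltxx.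
pose N := invmx M.
pose C := \sum_j \sum_l `|N^T j l|.
have C_ge0 : 0 <= C by rewrite sumr_ge0 // => j _; rewrite sumr_ge0.
exists (C + 1)^-1; split => [|w]; first by rewrite invr_gt0; lra.
pose u := w *m N.
have quw : qf M u w = nrm2 w by rewrite /qf /u -(mulmxA w N M) mulVmx // mulmx1.
have quu : qf M u u = qf N^T w w.
  by rewrite /qf /u trmx_mul -(mulmxA w N M) mulVmx // mulmx1 mulmxA.
have cs := qf_CS u w; rewrite quw quu in cs.
have hN : qf N^T w w <= C * nrm2 w by rewrite (le_trans (ler_norm _)) ?qf_bound.
have S_ge0 := nrm2_ge0 w; have q_ge0 := qf_psd w.
rewrite ler_pdivrMl; last lra.
have [S0|S_n0] := eqVneq (nrm2 w) 0; first by rewrite S0 mulr_ge0 //; lra.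
have S_gt0 : 0 < nrm2 w by rewrite lt_neqAle eq_sym S_n0.
have : nrm2 w * nrm2 w <= (C * qf M w w) * nrm2 w by nra.
rewrite ler_pM2r // => h; nra.
Qed.

End PositiveDefinite.
End QuadraticForms.

(* The axioms on (F, Re, Im, conj) shared by F = R and F = C: Re and Im are
   the coordinates of F in R^2 with the multiplication of C, conj negates Im,
   R embeds in F, and F is either R itself or contains an imaginary unit. *)
Record real_structure (R : realType) (F : scalars R) := RealStructure {
  rs_ofR : R -> F;
  rs_reD : forall a b : F, sc_re (a + b) = sc_re a + sc_re b;
  rs_imD : forall a b : F, sc_im (a + b) = sc_im a + sc_im b;
  rs_reM : forall a b : F, sc_re (a * b) = sc_re a * sc_re b - sc_im a * sc_im b;
  rs_imM : forall a b : F, sc_im (a * b) = sc_re a * sc_im b + sc_im a * sc_re b;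
  rs_reC : forall a : F, sc_re (sc_conj a) = sc_re a;
  rs_imC : forall a : F, sc_im (sc_conj a) = - sc_im a;
  rs_eq : forall a b : F, sc_re a = sc_re b -> sc_im a = sc_im b -> a = b;
  rs_re_ofR : forall r, sc_re (rs_ofR r) = r;
  rs_im_ofR : forall r, sc_im (rs_ofR r) = 0;
  rs_real_or_unit : (forall a : F, sc_im a = 0) \/
                    exists i : F, sc_re i = 0 /\ sc_im i = 1 }.

Section ScalarStructure.
Variables (R : realType) (F : scalars R) (S : real_structure F).
Local Notation re := (@sc_re R F).
Local Notation im := (@sc_im R F).
Local Notation cj := (@sc_conj R F).
Local Notation ofR := (rs_ofR S).
Let reD := rs_reD S.
Let imD := rs_imD S.
Let reM := rs_reM S.
Let imM := rs_imM S.
Let reC := rs_reC S.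
Let imC := rs_imC S.
Let re_ofR := rs_re_ofR S.
Let im_ofR := rs_im_ofR S.
Let eqF := rs_eq S.

Lemma re0 : re 0 = 0. Proof. by have := reD 0 0; rewrite addr0; lra. Qed.
Lemma im0 : im 0 = 0. Proof. by have := imD 0 0; rewrite addr0; lra. Qed.
Lemma reN (a : F) : re (- a) = - re a.
Proof. by have := reD a (- a); rewrite subrr re0; lra. Qed.
Lemma imN (a : F) : im (- a) = - im a.
Proof. by have := imD a (- a); rewrite subrr im0; lra. Qed.
Lemma re_sum I (s : seq I) (P : pred I) (f : I -> F) :
  re (\sum_(i <- s | P i) f i) = \sum_(i <- s | P i) re (f i).
Proof. exact: (big_morph re reD re0). Qed.
Lemma im_sum I (s : seq I) (P : pred I) (f : I -> F) :
  im (\sum_(i <- s | P i) f i) = \sum_(i <- s | P i) im (f i).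
Proof. exact: (big_morph im imD im0). Qed.

Lemma cjD (a b : F) : cj (a + b) = cj a + cj b.
Proof. by apply: eqF; rewrite ?reD ?imD ?reC ?imC ?reD ?imD; lra. Qed.
Lemma cjM (a b : F) : cj (a * b) = cj a * cj b.
Proof. by apply: eqF; rewrite ?reM ?imM ?reC ?imC ?reM ?imM ?reC ?imC; lra. Qed.
Lemma cjK (a : F) : cj (cj a) = a.
Proof. by apply: eqF; rewrite ?reC ?imC ?opprK. Qed.
Lemma cj0 : cj 0 = 0.
Proof. by apply: eqF; rewrite ?reC ?imC ?re0 ?im0 ?oppr0. Qed.
Lemma cjN (a : F) : cj (- a) = - cj a.
Proof. by apply: eqF; rewrite ?reC ?imC ?reN ?imN ?reC ?imC. Qed.
Lemma cj_ofR (r : R) : cj (ofR r) = ofR r.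
Proof. by apply: eqF; rewrite ?reC ?imC ?im_ofR ?oppr0. Qed.
Lemma cj_sum I (s : seq I) (P : pred I) (f : I -> F) :
  cj (\sum_(i <- s | P i) f i) = \sum_(i <- s | P i) cj (f i).
Proof. exact: (big_morph cj cjD cj0). Qed.
Lemma ofR_inj : injective ofR.
Proof. by move=> r s /(congr1 re); rewrite !re_ofR. Qed.

Lemma abs2_ge0 (a : F) : 0 <= abs2 a.
Proof. by rewrite /abs2 addr_ge0 // sqr_ge0. Qed.
Lemma abs2M (a b : F) : abs2 (a * b) = abs2 a * abs2 b.
Proof. by rewrite /abs2 reM imM; ring. Qed.
Lemma abs2N (a : F) : abs2 (- a) = abs2 a.
Proof. by rewrite /abs2 reN imN !sqrrN. Qed.
Lemma abs2D_le (a b : F) : abs2 (a + b) <= 2 * (abs2 a + abs2 b).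
Proof.
rewrite /abs2 reD imD.
by have := sqr_ge0 (re a - re b); have := sqr_ge0 (im a - im b); nra.
Qed.
Lemma abs2_eq0 (a : F) : abs2 a = 0 -> a = 0.
Proof.
rewrite /abs2 => h; have re_a : re a = 0 by nra.
have im_a : im a = 0 by nra.
by apply: eqF; rewrite ?re0 ?im0.
Qed.
Lemma abs2_ofR (r : R) : abs2 (ofR r) = r ^+ 2.
Proof. by rewrite /abs2 re_ofR im_ofR expr0n /= addr0. Qed.
Lemma re2_le (a : F) : re a ^+ 2 <= abs2 a.
Proof. by rewrite /abs2 lerDl sqr_ge0. Qed.
Lemma im2_le (a : F) : im a ^+ 2 <= abs2 a.
Proof. by rewrite /abs2 lerDr sqr_ge0. Qed.

Lemma vdotZD n (v y z : 'rV[F]_n) (a : F) : vdot v (a *: y + z) = cj a * vdot v y + vdot v z.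
Proof.
rewrite /vdot mulr_sumr -big_split /=; apply: eq_bigr => i _.
by rewrite !mxE cjD cjM; ring.
Qed.

Lemma vdot_sumZ n k (c : 'I_k -> F) (v : 'I_k -> 'rV[F]_n) (y : 'rV[F]_n) :
  vdot (\sum_j c j *: v j) y = \sum_j c j * vdot (v j) y.
Proof.
rewrite /vdot; under eq_bigr do rewrite summxE mulr_suml.
rewrite exchange_big /=; apply: eq_bigr => j _; rewrite mulr_sumr.
by apply: eq_bigr => i _; rewrite mxE mulrA.
Qed.

Lemma vdot0 n (y : 'rV[F]_n) : vdot 0 y = 0.
Proof. by rewrite /vdot big1 // => i _; rewrite mxE mul0r. Qed.

(* Realification: v in F^n has real coordinates (Re v, Im v) in R^(n+n), and
   multiplication by an imaginary unit acts as (a, b) |-> (-b, a). *)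
Definition realify n (v : 'rV[F]_n) : 'rV[R]_(n + n) :=
  row_mx (map_mx re v) (map_mx im v).
Definition realify_rot n (v : 'rV[F]_n) : 'rV[R]_(n + n) :=
  row_mx (- map_mx im v) (map_mx re v).

Lemma realify0 n : realify (0 : 'rV[F]_n) = 0.
Proof.
apply/rowP => k; rewrite /realify !mxE.
by case: splitP => j _; rewrite !mxE ?re0 ?im0.
Qed.

Definition rdot m (u w : 'rV[R]_m) : R := \sum_j u 0 j * w 0 j.

Lemma rdot_row_mx n1 n2 (a c : 'rV[R]_n1) (b e : 'rV[R]_n2) :
  rdot (row_mx a b) (row_mx c e) = rdot a c + rdot b e.
Proof.
by rewrite /rdot big_split_ord /=; congr (_ + _); apply: eq_bigr => i _;
  rewrite ?row_mxEl ?row_mxEr.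
Qed.

Lemma rdot0l m (w : 'rV[R]_m) : rdot 0 w = 0.
Proof. by rewrite /rdot big1 // => j _; rewrite mxE mul0r. Qed.

Lemma rdot0r m (w : 'rV[R]_m) : rdot w 0 = 0.
Proof. by rewrite /rdot big1 // => j _; rewrite mxE mulr0. Qed.

Lemma abs2_vdot n (v y : 'rV[F]_n) :
  abs2 (vdot v y) = rdot (realify v) (realify y) ^+ 2 + rdot (realify v) (realify_rot y) ^+ 2.
Proof.
rewrite /abs2 /realify /realify_rot !rdot_row_mx /rdot re_sum im_sum -!big_split /=.
by congr (_ ^+ 2 + _ ^+ 2); apply: eq_bigr => i _; rewrite !mxE ?reM ?imM reC imC; ring.
Qed.

Lemma vnorm2_realify n (v : 'rV[F]_n) : vnorm2 v = nrm2 (realify v).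
Proof.
rewrite nrm2E /realify big_split_ord /= /vnorm2 -big_split /=.
by apply: eq_bigr => i _; rewrite row_mxEl row_mxEr !mxE.
Qed.

(* Every non-zero direction w of the realification dominates the modulus of
   the Hermitian product with some non-zero vector of F^n: for F = C take the
   vector with coordinates w, for F = R one of the two halves of w. *)
Lemma realify_dominates n (w : 'rV[R]_(n + n)) : w != 0 ->
  exists2 v : 'rV[F]_n, v != 0 & forall y,
    abs2 (vdot v y) <= rdot w (realify y) ^+ 2 + rdot w (realify_rot y) ^+ 2.
Proof.
move=> w_n0; case: (rs_real_or_unit S) => [im_0|[i [re_i im_i]]]; last first.
  pose v : 'rV[F]_n := \row_k (ofR (lsubmx w 0 k) + i * ofR (rsubmx w 0 k)).
  have rv : realify v = w.
    rewrite -[RHS]hsubmxK; congr row_mx; apply/rowP => k; rewrite !mxE.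
      by rewrite reD reM re_i im_i re_ofR im_ofR; ring.
    by rewrite imD imM re_i im_i re_ofR im_ofR; ring.
  exists v => [|y]; last by rewrite abs2_vdot rv.
  by apply: contra w_n0 => /eqP v0; rewrite -rv v0 realify0.
pose ofRv (a : 'rV[R]_n) : 'rV[F]_n := map_mx ofR a.
have ofRv_n0 a : a != 0 -> ofRv a != 0.
  apply: contra => /eqP/rowP a0; apply/eqP/rowP => k.
  by have := congr1 re (a0 k); rewrite !mxE re_ofR re0.
have realify_ofRv a : realify (ofRv a) = row_mx a 0.
  by apply/rowP => k; rewrite !mxE; case: splitP => j _; rewrite !mxE ?re_ofR ?im_ofR.
have realify_real y : realify y = row_mx (map_mx re y) 0.
  by apply/rowP => k; rewrite !mxE; case: splitP => j _; rewrite !mxE ?im_0.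
have rot_real y : realify_rot y = row_mx 0 (map_mx re y).
  by apply/rowP => k; rewrite !mxE; case: splitP => j _; rewrite !mxE ?im_0 ?oppr0.
have dot_real a y : abs2 (vdot (ofRv a) y) = rdot a (map_mx re y) ^+ 2.
  by rewrite abs2_vdot realify_ofRv realify_real rot_real !rdot_row_mx
    !rdot0l !rdot0r !addr0 expr0n /= addr0.
have dot_w y : rdot w (realify y) ^+ 2 + rdot w (realify_rot y) ^+ 2 =
    rdot (lsubmx w) (map_mx re y) ^+ 2 + rdot (rsubmx w) (map_mx re y) ^+ 2.
  by rewrite -[w in LHS]hsubmxK realify_real rot_real !rdot_row_mx !rdot0r
    addr0 add0r.
have [l0|l_n0] := eqVneq (lsubmx w) 0.
  exists (ofRv (rsubmx w)) => [|y]; last by rewrite dot_real dot_w lerDr sqr_ge0.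
  apply: ofRv_n0; apply: contra w_n0 => /eqP r0.
  by rewrite -[w]hsubmxK l0 r0 row_mx0.
exists (ofRv (lsubmx w)) => [|y]; first exact: ofRv_n0.
by rewrite dot_real dot_w lerDl sqr_ge0.
Qed.

End ScalarStructure.

Definition realF_structure (R : realType) : real_structure (realF R).
Proof.
apply: (@RealStructure R (realF R) id) => //=.
- by move=> a b; rewrite addr0.
- by move=> a b; rewrite mulr0 subr0.
- by move=> a b; rewrite mulr0 mul0r addr0.
- by move=> a; rewrite oppr0.
- by left.
Defined.

Definition complexF_structure (R : realType) : real_structure (complexF R).
Proof.
apply: (@RealStructure R (complexF R) (fun r => r%:C%C)) => //=.
- by case=> ? ?; case.
- by case=> ? ?; case.
- by case=> ? ?; case.
- by case=> ? ?; case=> ? ? /=; rewrite addrC.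
- by case.
- by case.
- by case=> ? ?; case=> ? ? /= -> ->.
- by right; exists 'i%C.
Defined.

Section SquareIntegrable.
Variables (R : realType) (d : measure_display) (X : measurableType d)
  (mu : {measure set X -> \bar R}).

Definition L2R (p : X -> R) :=
  measurable_fun setT p /\ mu.-integrable setT (fun x => (p x ^+ 2)%:E).

Lemma integrable_ge0_lty (f : X -> R) : (forall x, 0 <= f x) ->
  mu.-integrable setT (fun x => (f x)%:E) -> (\int[mu]_x (f x)%:E < +oo)%E.
Proof.
move=> f_ge0 /integrableP [_]; congr (_ < _)%E; apply: eq_integral => x _.
by rewrite abse_EFin ger0_norm.
Qed.

Lemma lty_integrable_ge0 (f : X -> R) : measurable_fun setT f ->
  (forall x, 0 <= f x) -> (\int[mu]_x (f x)%:E < +oo)%E ->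
  mu.-integrable setT (fun x => (f x)%:E).
Proof.
move=> mf f_ge0 f_fin; apply/integrableP; split; first exact/measurable_EFinP.
by under eq_integral do rewrite abse_EFin ger0_norm //.
Qed.

Lemma L2R_N (p : X -> R) : L2R p -> L2R (fun x => - p x).
Proof.
move=> [mp ip]; split; first exact: measurableT_comp.
by under eq_fun do rewrite sqrrN.
Qed.

(* L^2 * L^2 is contained in L^1, by 2|pq| <= p^2 + q^2 *)
Lemma L2R_mul (p q : X -> R) : L2R p -> L2R q ->
  mu.-integrable setT (fun x => (p x * q x)%:E).
Proof.
move=> [mp ip] [mq iq].
apply: (@le_integrable _ _ _ mu setT measurableT _
   (fun x => ((p x ^+ 2)%:E + (q x ^+ 2)%:E)%E)).
- by apply/measurable_EFinP; exact: measurable_funM.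
- move=> x _; rewrite -EFinD !abse_EFin lee_fin normrM.
  rewrite [X in _ <= X]ger0_norm ?addr_ge0 ?sqr_ge0 //.
  have := sqr_ge0 (`|p x| - `|q x|).
  by rewrite -[p x ^+ 2]real_normK ?num_real // -[q x ^+ 2]real_normK ?num_real //; nra.
- exact: (@integrableD _ _ _ mu setT measurableT).
Qed.

Lemma L2R_row_mx n1 n2 (a : X -> 'rV[R]_n1) (b : X -> 'rV[R]_n2) :
  (forall i, L2R (fun x => a x 0 i)) -> (forall i, L2R (fun x => b x 0 i)) ->
  forall j, L2R (fun x => row_mx (a x) (b x) 0 j).
Proof.
move=> ha hb j; rewrite -[j]splitK; case: (fintype.split j) => k /=.
  by under eq_fun do rewrite row_mxEl.
by under eq_fun do rewrite row_mxEr.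
Qed.

Lemma measurable_rdot m (w : 'rV[R]_m) (psi : X -> 'rV[R]_m) :
  (forall j, measurable_fun setT (fun x => psi x 0 j)) ->
  measurable_fun setT (fun x => rdot w (psi x)).
Proof.
move=> m_psi; apply: (@measurable_sum _ _ _ _ _ _ (fun j x => w 0 j * psi x 0 j)).
by move=> j; exact: measurable_funM.
Qed.

Definition gram m (psi : X -> 'rV[R]_m) : 'M[R]_m :=
  \matrix_(j, l) fine (\int[mu]_x (psi x 0 j * psi x 0 l)%:E).

Lemma gram_sym m (psi : X -> 'rV[R]_m) : (gram psi)^T = gram psi.
Proof.
apply/matrixP => j l; rewrite !mxE; congr fine.
by apply: eq_integral => x _; rewrite mulrC.
Qed.

Lemma integral_rdot2 m (psi : X -> 'rV[R]_m) (w : 'rV[R]_m) :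
  (forall j, L2R (fun x => psi x 0 j)) ->
  (\int[mu]_x (rdot w (psi x) ^+ 2)%:E = (qf (gram psi) w w)%:E)%E.
Proof.
move=> L2psi.
have int_jl j l : mu.-integrable setT (fun x => (psi x 0 j * psi x 0 l)%:E).
  exact: L2R_mul.
have expand x : (rdot w (psi x) ^+ 2)%:E = (\sum_j \sum_l
    ((w 0 j * w 0 l)%:E * (psi x 0 j * psi x 0 l)%:E))%E.
  rewrite /rdot expr2 mulr_suml -sumEFin; apply: eq_bigr => j _.
  rewrite mulr_sumr -sumEFin; apply: eq_bigr => l _; rewrite -EFinM.
  by congr EFin; ring.
under eq_integral => x _ do rewrite expand.
rewrite integral_sum //; last first.
  move=> j; apply: (@integrable_sum _ _ _ mu setT measurableT) => l _.
  exact: integrableZl.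
rewrite qfE -sumEFin; apply: eq_bigr => j _.
rewrite integral_sum //; last by move=> l; exact: integrableZl.
rewrite -sumEFin; apply: eq_bigr => l _.
rewrite integralZl // mxE; set I := (\int[mu]_x _)%E.
have I_fin : I = (fine I)%:E by rewrite fineK // integrable_fin_num.
by rewrite [in LHS]I_fin -EFinM; congr EFin; ring.
Qed.

End SquareIntegrable.

Section Frames.
Variables (R : realType) (F : scalars R) (S : real_structure F).
Variables (d : measure_display) (X : measurableType d) (mu : {measure set X -> \bar R}).
Local Notation re := (@sc_re R F).
Local Notation im := (@sc_im R F).

Lemma measurable_abs2 (u : X -> F) : measurable_fun setT (fun x => re (u x)) ->
  measurable_fun setT (fun x => im (u x)) -> measurable_fun setT (fun x => abs2 (u x)).
Proof. by move=> mre mim; apply: measurable_funD; apply: measurable_funX. Qed.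

Lemma L2scal_integrable (u : X -> F) : L2scal mu u ->
  mu.-integrable setT (fun x => (abs2 (u x))%:E).
Proof.
move=> [mre [mim fin]]; apply: lty_integrable_ge0 => // [|x]; last exact: abs2_ge0.
exact: measurable_abs2.
Qed.

Lemma L2R_re (u : X -> F) : L2scal mu u -> L2R mu (fun x => re (u x)).
Proof.
move=> L2u; have [mre _] := L2u; split => //.
apply: (@le_integrable _ _ _ mu setT measurableT _ (fun x => (abs2 (u x))%:E)).
- by apply/measurable_EFinP; exact: measurable_funX.
- by move=> x _; rewrite !abse_EFin lee_fin !ger0_norm ?abs2_ge0 ?sqr_ge0 ?re2_le.
- exact: L2scal_integrable.
Qed.

Lemma L2R_im (u : X -> F) : L2scal mu u -> L2R mu (fun x => im (u x)).
Proof.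
move=> L2u; have [_ [mim _]] := L2u; split => //.
apply: (@le_integrable _ _ _ mu setT measurableT _ (fun x => (abs2 (u x))%:E)).
- by apply/measurable_EFinP; exact: measurable_funX.
- by move=> x _; rewrite !abse_EFin lee_fin !ger0_norm ?abs2_ge0 ?sqr_ge0 ?im2_le.
- exact: L2scal_integrable.
Qed.

Lemma L2scal_comb (a : F) (u w : X -> F) : L2scal mu u -> L2scal mu w ->
  L2scal mu (fun x => a * u x + w x).
Proof.
move=> L2u L2w; have [u1 [u2 _]] := L2u; have [w1 [w2 _]] := L2w.
have m_re : measurable_fun setT (fun x => re (a * u x + w x)).
  under eq_fun do rewrite (rs_reD S) (rs_reM S).
  by apply: measurable_funD => //; apply: measurable_funB; exact: measurable_funM.
have m_im : measurable_fun setT (fun x => im (a * u x + w x)).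
  under eq_fun do rewrite (rs_imD S) (rs_imM S).
  by apply: measurable_funD => //; apply: measurable_funD; exact: measurable_funM.
split => //; split => //.
apply: integrable_ge0_lty; first by move=> x; exact: abs2_ge0.
apply: (@le_integrable _ _ _ mu setT measurableT _
   (fun x => ((2 * abs2 a)%:E * (abs2 (u x))%:E + 2%:E * (abs2 (w x))%:E)%E)).
- by apply/measurable_EFinP; exact: measurable_abs2.
- move=> x _; rewrite -!EFinM -EFinD !abse_EFin lee_fin !ger0_norm ?abs2_ge0 //.
    by rewrite (le_trans (abs2D_le S _ _)) // (abs2M S); lra.
  by rewrite addr_ge0 // !mulr_ge0 // abs2_ge0.
- by apply: (@integrableD _ _ _ mu setT measurableT); apply: integrableZl => //;
    exact: L2scal_integrable.
Qed.

Lemma L2vec_comb n (a : F) (f g : X -> 'rV[F]_n) : L2vec mu f -> L2vec mu g ->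
  L2vec mu (fun x => a *: f x + g x).
Proof. by move=> L2f L2g i; under eq_fun do rewrite !mxE; exact: L2scal_comb. Qed.

Lemma L2vec_norm_lty n (f : X -> 'rV[F]_n) : L2vec mu f ->
  measurable_fun setT (fun x => vnorm2 (f x)) /\
  (\int[mu]_x (vnorm2 (f x))%:E < +oo)%E.
Proof.
move=> L2f; have m_i i : measurable_fun setT (fun x => abs2 (f x 0 i)).
  by have [m1 [m2 _]] := L2f i; exact: measurable_abs2.
split; first exact: (@measurable_sum _ _ _ _ _ _ (fun i x => abs2 (f x 0 i))).
rewrite /vnorm2; under eq_integral do rewrite -sumEFin.
rewrite ge0_integral_sum //.
- apply: lte_sum_pinfty => i _; apply: integrable_ge0_lty; last exact: L2scal_integrable.
  by move=> x; exact: abs2_ge0.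
- by move=> i; apply/measurable_EFinP.
- by move=> i x _; rewrite lee_fin abs2_ge0.
Qed.

Lemma L2R_realify n (phi : X -> 'rV[F]_n) : L2vec mu phi ->
  forall j, L2R mu (fun x => realify (phi x) 0 j).
Proof.
move=> L2phi; apply: L2R_row_mx => i; under eq_fun do rewrite mxE.
  exact: L2R_re.
exact: L2R_im.
Qed.

Lemma L2R_realify_rot n (phi : X -> 'rV[F]_n) : L2vec mu phi ->
  forall j, L2R mu (fun x => realify_rot (phi x) 0 j).
Proof.
move=> L2phi; apply: L2R_row_mx => i; under eq_fun do rewrite !mxE.
  exact/L2R_N/L2R_im.
exact: L2R_re.
Qed.

Definition ae_total n (phi : X -> 'rV[F]_n) :=
  forall v, v != 0 -> ~ {ae mu, forall x, vdot v (phi x) = 0}.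

Section FrameOperator.
Variables (n : nat) (phi : X -> 'rV[F]_n).
Hypothesis L2phi : L2vec mu phi.

(* Matrix, in real coordinates, of the quadratic form
   v |-> \int |<v, phi x>|^2 = \int (Re <v,phi>)^2 + (Im <v,phi>)^2. *)
Definition frame_gram : 'M[R]_(n + n) :=
  gram mu (fun x => realify (phi x)) + gram mu (fun x => realify_rot (phi x)).

Lemma frame_gram_sym : frame_gram^T = frame_gram.
Proof. by rewrite /frame_gram linearD /= !gram_sym. Qed.

(* the pointwise form whose integral is qf frame_gram; at w = realify v it
   equals |<v, phi x>|^2 *)
Definition frame_qf (w : 'rV[R]_(n + n)) (x : X) : R :=
  rdot w (realify (phi x)) ^+ 2 + rdot w (realify_rot (phi x)) ^+ 2.

Lemma measurable_frame_qf w : measurable_fun setT (frame_qf w).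
Proof.
apply: measurable_funD; apply: measurable_funX; apply: measurable_rdot => j.
  by have [] := L2R_realify L2phi j.
by have [] := L2R_realify_rot L2phi j.
Qed.

Lemma integral_frame_qf w :
  (\int[mu]_x (frame_qf w x)%:E = (qf frame_gram w w)%:E)%E.
Proof.
have int_sq (psi : X -> 'rV[R]_(n + n)) : (forall j, L2R mu (fun x => psi x 0 j)) ->
    mu.-integrable setT (fun x => (rdot w (psi x) ^+ 2)%:E).
  move=> L2psi; apply: lty_integrable_ge0; last by rewrite integral_rdot2 ?ltry.
    by apply: measurable_funX; apply: measurable_rdot => j; have [] := L2psi j.
  by move=> x; exact: sqr_ge0.
have L2re := L2R_realify L2phi; have L2rot := L2R_realify_rot L2phi.
under eq_integral do rewrite EFinD.
by rewrite integralD ?int_sq // !integral_rdot2 // qfDM EFinD.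
Qed.

Lemma integral_vdot (v : 'rV[F]_n) :
  (\int[mu]_x (abs2 (vdot v (phi x)))%:E = (qf frame_gram (realify v) (realify v))%:E)%E.
Proof.
by rewrite -integral_frame_qf; apply: eq_integral => x _; rewrite (abs2_vdot S).
Qed.

(* Totality makes the frame quadratic form positive definite: a non-zero
   w dominates |<v, phi>|^2 for some v != 0, whose integral is positive. *)
Lemma frame_gram_pd : ae_total phi ->
  forall w, w != 0 -> 0 < qf frame_gram w w.
Proof.
move=> total w w_n0; have [v v_n0 v_dom] := realify_dominates S w_n0.
have m_v : measurable_fun setT (fun x => abs2 (vdot v (phi x))).
  have := measurable_frame_qf (realify v).
  by apply: eq_measurable_fun => x _; rewrite /frame_qf (abs2_vdot S).
have int_v_gt0 : (0 < \int[mu]_x (abs2 (vdot v (phi x)))%:E)%E.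
  rewrite lt0e integral_ge0 ?andbT => [|x _]; last by rewrite lee_fin abs2_ge0.
  apply/negP => /eqP int0; apply: (total v v_n0).
  have : (\int[mu]_x `|(abs2 (vdot v (phi x)))%:E| = 0)%E.
    by rewrite -int0; apply: eq_integral => x _; rewrite abse_EFin ger0_norm ?abs2_ge0.
  move/(ae_eq_integral_abs mu measurableT (proj2 (measurable_EFinP _ _) m_v)).
  by apply: filterS => x /(_ I) [/(abs2_eq0 S) ->].
rewrite -lte_fin -integral_frame_qf (lt_le_trans int_v_gt0) //.
apply: ge0_le_integral => //.
- by move=> x _; rewrite lee_fin abs2_ge0.
- exact/measurable_EFinP.
- exact/measurable_EFinP/measurable_frame_qf.
- by move=> x _; rewrite lee_fin v_dom.
Qed.

End FrameOperator.

(* Frame criterion: an a.e. total element of L^2(X, mu; F^n) is a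
   continuous frame, with bounds the lower and upper bounds of the positive
   definite form frame_gram. *)
Lemma ae_total_frame n (phi : X -> 'rV[F]_n) :
  L2vec mu phi -> ae_total phi -> is_cont_frame mu phi.
Proof.
move=> L2phi total.
have [A [A_gt0 lowA]] := pd_lower (frame_gram_sym phi) (frame_gram_pd L2phi total).
have [B [B_ge0 upB]] := qf_upper (frame_gram phi).
split => //; exists A, (A + B); do 2!split => //; first lra.
move=> v; rewrite integral_vdot // !lee_fin vnorm2_realify; split; first exact: lowA.
by rewrite (le_trans (upB _)) // ler_wpM2r ?nrm2_ge0 //; lra.
Qed.

End Frames.

Lemma mobius_inj (K : fieldType) (k a b : K) : 1 - a * k != 0 -> 1 - b * k != 0 ->
  a / (1 - a * k) = b / (1 - b * k) -> a = b.
Proof.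
move=> a_n0 b_n0 /eqP; rewrite eqr_div // => /eqP ab.
apply/eqP; rewrite -subr_eq0.
have -> : a - b = a * (1 - b * k) - b * (1 - a * k) by ring.
by rewrite ab subrr.
Qed.

Lemma small_distinct_reals (R : realFieldType) (B e : R) k : 0 <= B -> 0 < e ->
  exists r : 'I_k -> R, [/\ injective r, forall j, r j != 0 &
                            forall j, r j ^+ 2 * B < e ^+ 2].
Proof.
move=> B_ge0 e_gt0; pose dl := e / (k.+1%:R * (B + 1)).
have dl_gt0 : 0 < dl by rewrite divr_gt0 // mulr_gt0 // ltr_wpDl.
exists (fun j => dl * j.+1%:R); split => [i j /(mulfI (lt0r_neq0 dl_gt0))/eqP|j|j].
- by rewrite eqr_nat eqSS => /eqP/val_inj.
- by rewrite mulf_neq0 ?lt0r_neq0.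
have jk : j.+1%:R <= k.+1%:R :> R by rewrite ler_nat ltnW // ltnS.
have t_le : dl * j.+1%:R * (B + 1) <= e.
  have -> : dl * j.+1%:R * (B + 1) = e * (j.+1%:R / k.+1%:R).
    rewrite /dl; field.
    by rewrite addrC natr1 pnatr_eq0 /= lt0r_neq0 // ltr_wpDl.
  apply: ler_piMr; first exact: ltW.
  by rewrite ler_pdivrMr ?ltr0Sn // mul1r.
have r_gt0 : 0 < dl * j.+1%:R by rewrite mulr_gt0.
set r := dl * j.+1%:R in t_le r_gt0 *.
have r_le_t : r <= r * (B + 1) by nra.
have lt_rt : r ^+ 2 * B < r * (r * (B + 1)) by rewrite expr2 -mulrA ltr_pM2l // ltr_pM2l //; lra.
have le_e2 : r * (r * (B + 1)) <= e ^+ 2.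
  have r_le_e : r <= e by lra.
  have t_ge0 : 0 <= r * (B + 1) by lra.
  by rewrite expr2; apply: ler_pM => //; exact: ltW.
exact: lt_le_trans lt_rt le_e2.
Qed.

Section Density.
Variables (R : realType) (F : scalars R) (S : real_structure F).
Variables (d : measure_display) (X : measurableType d) (mu : {measure set X -> \bar R}).
Variables (n : nat) (T : (X -> 'rV[F]_n) -> F) (c : F) (f : X -> 'rV[F]_n).
Variable h : 'I_n -> X -> F.
Hypotheses (T_lin : L2_linear_form mu T) (c_n0 : c != 0).
Hypotheses (L2f : L2vec mu f) (Tf : T f = c).
Hypotheses (L2h : forall i, L2scal mu (h i)) (h_indep : forall coef : 'I_n -> F,
  {ae mu, forall x, \sum_(i < n) coef i * h i x = 0} -> forall i, coef i = 0).
Local Notation cj := (@sc_conj R F).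
Local Notation ofR := (rs_ofR S).

(* H collects the independent family; K = H - (T H / c) f spans a direction
   of ker T, and the affine line a |-> f + a K stays in the fibre T = c. *)
Definition indep_vec (x : X) : 'rV[F]_n := \row_i h i x.
Definition kap : F := T indep_vec / c.
Definition kernel_dir (x : X) : 'rV[F]_n := (- kap) *: f x + indep_vec x.
Definition fibre_line (a : F) (x : X) : 'rV[F]_n := a *: kernel_dir x + f x.

Lemma L2vec_indep_vec : L2vec mu indep_vec.
Proof. by move=> i; under eq_fun do rewrite mxE; exact: L2h. Qed.

Lemma L2vec_kernel_dir : L2vec mu kernel_dir.
Proof. exact: L2vec_comb L2f L2vec_indep_vec. Qed.

Lemma L2vec_fibre_line a : L2vec mu (fibre_line a).
Proof. exact: L2vec_comb L2vec_kernel_dir L2f. Qed.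

Lemma T_fibre_line a : T (fibre_line a) = c.
Proof.
have T_K : T kernel_dir = 0.
  rewrite /kernel_dir (proj2 T_lin) //; last exact: L2vec_indep_vec.
  by rewrite Tf /kap mulNr divfK // addNr.
rewrite /fibre_line (proj2 T_lin) //; last exact: L2vec_kernel_dir.
by rewrite T_K mulr0 add0r.
Qed.

Definition kernel_norm2 : R := fine (\int[mu]_x (vnorm2 (kernel_dir x))%:E).

Lemma kernel_norm2_ge0 : 0 <= kernel_norm2.
Proof.
by apply/fine_ge0/integral_ge0 => x _; rewrite lee_fin sumr_ge0 // => i _; rewrite abs2_ge0.
Qed.

Lemma dist_fibre_line a : L2dist2 mu f (fibre_line a) = (abs2 a * kernel_norm2)%:E.
Proof.
have [mK finK] := L2vec_norm_lty L2vec_kernel_dir.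
have diff x : vnorm2 (f x - fibre_line a x) = abs2 a * vnorm2 (kernel_dir x).
  rewrite /vnorm2 mulr_sumr; apply: eq_bigr => i _; rewrite !mxE.
  by rewrite opprD addrCA subrr addr0 (abs2N S) (abs2M S).
rewrite /L2dist2; under eq_integral do rewrite diff EFinM.
rewrite ge0_integralZl_EFin ?abs2_ge0 //.
- rewrite EFinM /kernel_norm2 fineK ?ge0_fin_numE //.
  by apply: integral_ge0 => x _; rewrite lee_fin sumr_ge0 // => i _; rewrite abs2_ge0.
- by move=> x _; rewrite lee_fin sumr_ge0 // => i _; rewrite abs2_ge0.
- exact/measurable_EFinP.
Qed.

Lemma indep_vec_orth v : {ae mu, forall x, vdot v (indep_vec x) = 0} -> v = 0.
Proof.
move=> ortho; have cj_v : forall i, cj (v 0 i) = 0.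
  apply: h_indep; apply: filterS ortho => x vH0.
  rewrite -[RHS](cj0 S) -[in RHS]vH0 /vdot (cj_sum S); apply: eq_bigr => k _.
  by rewrite (cjM S) (cjK S) /indep_vec mxE.
by apply/rowP => i; rewrite mxE -[v 0 i](cjK S) cj_v (cj0 S).
Qed.

Lemma vdot_fibre_line (r : R) v x : vdot v (fibre_line (ofR r) x) =
  (1 - ofR r * cj kap) * vdot v (f x) + ofR r * vdot v (indep_vec x).
Proof. by rewrite (vdotZD S) (cj_ofR S) /kernel_dir (vdotZD S) (cjN S); ring. Qed.

Definition mobius (a : F) : F := a / (1 - a * cj kap).

Lemma degenerate_line_relation (r : R) v : r != 0 -> v != 0 ->
  {ae mu, forall x, vdot v (fibre_line (ofR r) x) = 0} ->
  1 - ofR r * cj kap != 0 /\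
  {ae mu, forall x, vdot v (f x) + mobius (ofR r) * vdot v (indep_vec x) = 0}.
Proof.
move=> r_n0 v_n0 ortho.
have ofR_n0 : ofR r != 0.
  by apply: contra r_n0 => /eqP/(congr1 (@sc_re R F)); rewrite (rs_re_ofR S) (re0 S) => ->.
have alpha_n0 : 1 - ofR r * cj kap != 0.
  apply/negP => /eqP alpha0; apply/negP: v_n0; apply/negPn/eqP/indep_vec_orth.
  apply: filterS ortho => x; rewrite vdot_fibre_line alpha0 mul0r add0r.
  by move/eqP; rewrite mulf_eq0 (negbTE ofR_n0) => /eqP.
split=> //; apply: filterS ortho => x; rewrite vdot_fibre_line => ortho_x.
have -> : vdot v (f x) + mobius (ofR r) * vdot v (indep_vec x) =
    ((1 - ofR r * cj kap) * vdot v (f x) + ofR r * vdot v (indep_vec x)) /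
    (1 - ofR r * cj kap) by rewrite /mobius; field.
by rewrite ortho_x mul0r.
Qed.

Lemma fibre_line_ae_total (r : 'I_n.+1 -> R) :
  injective r -> (forall j, r j != 0) ->
  exists j, ae_total mu (fibre_line (ofR (r j))).
Proof.
move=> r_inj r_n0; apply: contrapT => all_deg.
have witness j : exists V, V != 0 /\ {ae mu, forall x, vdot V (fibre_line (ofR (r j)) x) = 0}.
  apply: contrapT => no_V; apply: all_deg; exists j => V V_n0 ortho.
  by apply: no_V; exists V.
have [V V_deg] := choice witness.
pose lam j := mobius (ofR (r j)).
have rel j := degenerate_line_relation (r_n0 j) (V_deg j).1 (V_deg j).2.
have lam_inj : injective lam.
  move=> i j /mobius_inj lam_ij; apply/r_inj/(@ofR_inj _ _ S).
  exact: lam_ij (rel i).1 (rel j).1.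
have stable (coef : 'I_n.+1 -> F) : \sum_j coef j *: V j = 0 ->
    \sum_j (coef j * lam j) *: V j = 0.
  move=> rel_coef; apply: indep_vec_orth.
  have all_rel : {ae mu, forall x j,
      vdot (V j) (f x) + lam j * vdot (V j) (indep_vec x) = 0}.
    by apply: filter_forall => j; exact: (rel j).2.
  apply: filterS all_rel => x rel_x; rewrite vdot_sumZ.
  have : \sum_j coef j * (vdot (V j) (f x) + lam j * vdot (V j) (indep_vec x)) = 0.
    by apply: big1 => j _; rewrite rel_x mulr0.
  under eq_bigr do rewrite mulrDr mulrA.
  by rewrite big_split /= -vdot_sumZ rel_coef vdot0 add0r.
have [coef rel_coef [j coef_j]] := vectors_dependent V.
have := eigen_family_free lam_inj (fun j => (V_deg j).1) stable rel_coef j.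
by move/eqP; rewrite (negbTE coef_j).
Qed.

End Density.

(* Corollary 6.1 for every scalar field satisfying the axioms: approximate f
   by the point of the line with a small real parameter that is a.e. total,
   hence a frame. *)
Lemma frames_dense_in_fibres (R : realType) (F : scalars R) :
  real_structure F -> corollary6p1_for F.
Proof.
move=> S d X mu n T _ T_lin _ [h [L2h h_indep]] c c_n0 f L2f Tf e e_gt0.
have [r [r_inj r_n0 r_small]] :=
  small_distinct_reals n.+1 (kernel_norm2_ge0 mu T c f h) e_gt0.
have [j total] := fibre_line_ae_total S T c f h_indep r_inj r_n0.
exists (fibre_line T c f h (rs_ofR S (r j))); split; [|split].
- exact: ae_total_frame (L2vec_fibre_line S T c L2f L2h _) total.
- exact: (T_fibre_line S T_lin c_n0 L2f Tf L2h).
- by rewrite (dist_fibre_line S T c L2f L2h) (abs2_ofR S) lte_fin.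
Qed.

Theorem corollary6p1 (R : realType) :
  corollary6p1_for (realF R) /\ corollary6p1_for (complexF R).
Proof.
by split; apply: frames_dense_in_fibres; [exact: realF_structure | exact: complexF_structure].
Qed.
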